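(* For every instance $(d,\mathcal{C},k)$ of $k$-center and every execution of the reverse greedy algorithm on it (with any tie-breaking), the returned set $F_{n-k}$ satisfies $\mathrm{cost}(F_{n-k})\le 2k\cdot\mathrm{OPT}$; i.e., reverse greedy is a $2k$-approximation for $k$-center.
   Context: An instance of $k$-center consists of a finite metric space $(d,\mathcal{C})$ with $|\mathcal{C}|=n$ and an integer $k\ge 1$ with $k\le n$; every point is both a client and a potential facility. For nonempty $F\subseteq\mathcal{C}$, $d(c,F):=\min_{f\in F}d(c,f)$ and $\mathrm{cost}(F):=\max_{c\in\mathcal{C}}d(c,F)$; $\mathrm{OPT}$ is the minimum of $\mathrm{cost}(F)$ over $F\subseteq\mathcal{C}$ with $|F|\le k$. Reverse greedy: $F_0:=\mathcal{C}$, and for $i=1,\dots,n-k$, $F_i:=F_{i-1}\setminus\{f_i\}$ where $f_i\in\arg\min_{f\in F_{i-1}}\mathrm{cost}(F_{i-1}\setminus\{f\})$, ties broken arbitrarily; output $F_{n-k}$. *)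

From HB Require Import structures.
From mathcomp Require Import all_boot all_order all_algebra.
Set Implicit Arguments. Unset Strict Implicit. Unset Printing Implicit Defensive.
Import Order.TTheory GRing.Theory Num.Theory.
Local Open Scope ring_scope.

Section KCenter.
Variables (R : realFieldType) (T : finType).

(* metric axioms on the finite point set T (clients = facilities = T) *)
Definition is_metric (d : T -> T -> R) : Prop :=
  [/\ forall x y, 0 <= d x y,
      forall x y, d x y = 0 <-> x = y,
      forall x y, d x y = d y x
    & forall x y z, d x z <= d x y + d y z].

(* the diameter; used only as the neutral element of the min below, so that
   for nonempty F the min is the true minimum *)
Definition diam (d : T -> T -> R) : R :=
  \big[Num.max/0]_(x : T) \big[Num.max/0]_(y : T) d x y.

Definition distF (d : T -> T -> R) (F : {set T}) (c : T) : R :=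
  \big[Num.min/diam d]_(f in F) d c f.

Definition cost (d : T -> T -> R) (F : {set T}) : R :=
  \big[Num.max/0]_(c : T) distF d F c.

Definition OPT (d : T -> T -> R) (k : nat) : R :=
  \big[Num.min/diam d]_(F : {set T} | (0 < #|F|)%N && (#|F| <= k)%N) cost d F.

Definition rg_step (d : T -> T -> R) (Fprev Fnext : {set T}) : Prop :=
  exists2 f, f \in Fprev &
    Fnext = Fprev :\ f /\
    (forall g, g \in Fprev -> cost d (Fprev :\ f) <= cost d (Fprev :\ g)).

Definition rg_run (d : T -> T -> R) (k : nat) (Fs : nat -> {set T}) : Prop :=
  Fs 0%N = [set: T] /\
  forall i, (i < #|T| - k)%N -> rg_step d (Fs i) (Fs i.+1).

End KCenter.

(** Fix an optimal solution O with radius r = OPT and send every point c to a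
    centre sigma c of O with d(c, sigma c) <= r.  Projecting a set F of
    facilities onto O, F |-> sigma(F), changes its cost by at most r in either
    direction.  While |F| > |O| >= |sigma(F)|, two facilities of F share a
    centre, so one of them can be dropped without shrinking sigma(F); hence
    the greedy step satisfies cost(F') <= cost(sigma(F)) + r, and
    cost(sigma(F')) <= cost(sigma(F)) + 2r.  The projected cost is unchanged
    when sigma(F') = sigma(F), so it grows by 2r only when a centre of O is
    lost, which happens at most k - 1 times before the final set, of size k,
    is reached: cost(sigma(F_0)) <= r gives cost(F_{n-k}) <= 2k r. *)

From mathcomp Require Import all_boot all_order all_algebra.
From mathcomp Require Import zify.
Import Order.TTheory GRing.Theory Num.Theory.
Local Open Scope ring_scope.
Set Implicit Arguments. Unset Strict Implicit.

Lemma imsetD1_eq_of_card_lt (aT rT : finType) (f : aT -> rT) (A : {set aT}) :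
  (#|f @: A| < #|A|)%N -> exists2 a, a \in A & f @: (A :\ a) = f @: A.
Proof.
move=> /ltn_eqF/negbT/imset_injP injN.
have /dinjectivePn[a aA [b /andP[ba bA] fab]] : ~~ dinjectiveb f A.
  by apply/negP => /dinjectiveP.
exists a => //; apply/eqP; rewrite eqEsubset imsetS ?subsetDl //=.
apply/subsetP => _ /imsetP[c cA ->]; have [-> | ca] := eqVneq c a.
  by rewrite fab imset_f // !inE ba.
by rewrite imset_f // !inE ca.
Qed.

Section Costs.
Variables (R : realFieldType) (T : finType) (d : T -> T -> R).
Implicit Types (F G : {set T}) (c : T).

Lemma diam_ge0 : 0 <= diam d.
Proof. exact: bigmax_ge_id. Qed.

Lemma dist_le_diam x y : d x y <= diam d.
Proof. exact: le_trans (le_bigmax _ (fun y => d x y) y) (le_bigmax _ _ x). Qed.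

Lemma distF_le F c f : f \in F -> distF d F c <= d c f.
Proof. exact: bigmin_le_cond. Qed.

Lemma distF_le_diam F c : distF d F c <= diam d.
Proof. exact: bigmin_le_id. Qed.

Lemma distF_attained F c f0 : f0 \in F -> exists2 f, f \in F & distF d F c = d c f.
Proof.
move=> f0F; have [f fF dcf] := eq_bigmin _ _ _ f0F (fun f _ => dist_le_diam c f).
by exists f.
Qed.

Lemma distF_le_cost F c : distF d F c <= cost d F.
Proof. exact: le_bigmax. Qed.

Lemma cost_ge0 F : 0 <= cost d F.
Proof. exact: bigmax_ge_id. Qed.

Lemma cost_le_diam F : cost d F <= diam d.
Proof. by apply: bigmax_le => [|c _]; rewrite ?diam_ge0 ?distF_le_diam. Qed.

Lemma OPT_attained k (t : T) : (0 < k)%N ->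
  exists2 O : {set T}, (0 < #|O| <= k)%N & OPT d k = cost d O.
Proof.
move=> k_gt0; pose feasible (O : {set T}) := (0 < #|O| <= k)%N.
have t_feas : feasible [set t] by rewrite /feasible cards1.
have [O O_feas OPT_O] := eq_bigmin _ _ (cost d) t_feas (fun O _ => cost_le_diam O).
by exists O.
Qed.

Hypothesis d_metric : is_metric d.

Lemma cost_le_addr F G r : 0 <= r ->
    (forall g, g \in G -> exists2 f, f \in F & d g f <= r) ->
  cost d F <= cost d G + r.
Proof.
move=> r_ge0 G_near_F; apply: bigmax_le => [|c _]; first by rewrite addr_ge0 ?cost_ge0.
have [G0 | [g0 g0G]] := set_0Vmem G.
  (* the distance to the empty set is the junk value [diam d] *)
  apply: le_trans (distF_le_diam F c) _.
  have -> : diam d = distF d G c by rewrite G0 /distF big_set0.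
  by rewrite ler_wpDr // distF_le_cost.
have [g gG dg] := distF_attained c g0G; have [f fF gf] := G_near_F g gG.
have [_ _ _ d_tri] := d_metric.
apply: le_trans (distF_le c fF) _; apply: le_trans (d_tri c g f) _.
by rewrite lerD // -dg distF_le_cost.
Qed.

End Costs.

Section ReverseGreedy.
Variables (R : realFieldType) (T : finType) (d : T -> T -> R).
Hypothesis d_metric : is_metric d.
Implicit Types (F : {set T}) (c : T).

Lemma rg_step_subset F F' : rg_step d F F' -> F' \subset F.
Proof. by case=> f _ [-> _]; apply: subsetDl. Qed.

Lemma rg_step_card F F' : rg_step d F F' -> #|F'| = #|F|.-1.
Proof. by case=> f fF [-> _]; rewrite (cardsD1 f F) fF. Qed.

Variables (k : nat) (Fs : nat -> {set T}).
Hypothesis run : rg_run d k Fs.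

Lemma rg_run_card i : (i <= #|T| - k)%N -> #|Fs i| = (#|T| - i)%N.
Proof.
have [Fs0 steps] := run.
elim: i => [_ | i IH lt_i]; first by rewrite Fs0 cardsT subn0.
by rewrite (rg_step_card (steps i lt_i)) IH ?subnS // ltnW.
Qed.

Variables (O : {set T}) (sigma : T -> T).
Hypotheses (sigmaO : forall c, sigma c \in O)
           (sigma_near : forall c, d c (sigma c) <= cost d O).
Hypothesis O_small : (#|O| <= k)%N.
Local Notation r := (cost d O).

Lemma card_imset_le F : (#|sigma @: F| <= #|O|)%N.
Proof. by apply/subset_leq_card/subsetP => _ /imsetP[c _ ->]. Qed.

Lemma cost_le_cost_imset F : cost d F <= cost d (sigma @: F) + r.
Proof.
have [_ _ d_sym _] := d_metric.
apply: (cost_le_addr d_metric) => [|_ /imsetP[f fF ->]]; first exact: cost_ge0.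
by exists f; rewrite // d_sym.
Qed.

Lemma cost_imset_le_cost F : cost d (sigma @: F) <= cost d F + r.
Proof.
apply: (cost_le_addr d_metric) => [|f fF]; first exact: cost_ge0.
by exists (sigma f); rewrite ?imset_f.
Qed.

Lemma rg_step_cost_le F F' : rg_step d F F' -> (#|O| < #|F|)%N ->
  cost d F' <= cost d (sigma @: F) + r.
Proof.
move=> [f fF [-> greedy]] O_lt_F.
have [g gF sigma_g] := imsetD1_eq_of_card_lt (leq_ltn_trans (card_imset_le F) O_lt_F).
by apply: le_trans (greedy g gF) _; rewrite -sigma_g cost_le_cost_imset.
Qed.

Lemma rg_step_cost_imset F F' : rg_step d F F' -> (#|O| < #|F|)%N ->
    cost d (sigma @: F) <= r *+ (2 * (#|O| - #|sigma @: F|)).+1 ->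
  cost d (sigma @: F') <= r *+ (2 * (#|O| - #|sigma @: F'|)).+1.
Proof.
move=> step O_lt_F costF.
have [-> // | shrunk] := eqVneq (sigma @: F') (sigma @: F).
have lost : (#|sigma @: F'| < #|sigma @: F|)%N.
  by rewrite proper_card // properEneq shrunk imsetS // (rg_step_subset step).
have le_O := card_imset_le F.
apply: le_trans (cost_imset_le_cost F') _.
apply: le_trans (lerD (rg_step_cost_le step O_lt_F) (lexx r)) _.
apply: le_trans (lerD (lerD costF (lexx r)) (lexx r)) _.
rewrite -!mulrSr ler_wpMn2l ?cost_ge0 //; lia.
Qed.

Lemma rg_run_cost_imset i : (i <= #|T| - k)%N ->
  cost d (sigma @: Fs i) <= r *+ (2 * (#|O| - #|sigma @: Fs i|)).+1.
Proof.
have [Fs0 steps] := run.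
elim: i => [_ | i IH lt_i].
  apply: le_trans (_ : _ <= r *+ 1) (ler_wpMn2l (cost_ge0 d O) _) => //.
  apply: bigmax_le => [|c _]; first by rewrite mulr1n cost_ge0.
  by rewrite mulr1n Fs0 (le_trans (distF_le d c (imset_f sigma (in_setT c)))).
apply: (rg_step_cost_imset (steps i lt_i)) (IH (ltnW lt_i)).
by rewrite rg_run_card ?(ltnW lt_i) //; lia.
Qed.

Lemma rg_run_cost_le : (0 < k <= #|T|)%N -> cost d (Fs (#|T| - k)) <= r *+ (2 * k).
Proof.
case/andP => k_gt0 k_le_T.
have card_last : #|Fs (#|T| - k)| = k by rewrite rg_run_card // subKn.
have [f f_last] : exists f, f \in Fs (#|T| - k) by apply/card_gt0P; rewrite card_last.
have imset_gt0 : (0 < #|sigma @: Fs (#|T| - k)|)%N.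
  by apply/card_gt0P; exists (sigma f); apply: imset_f.
have le_O := card_imset_le (Fs (#|T| - k)).
apply: le_trans (cost_le_cost_imset _) _.
apply: le_trans (lerD (rg_run_cost_imset (leqnn _)) (lexx r)) _.
rewrite -mulrSr ler_wpMn2l ?cost_ge0 //; lia.
Qed.

End ReverseGreedy.

Theorem lemma2 (R : realFieldType) (T : finType) (d : T -> T -> R) (k : nat)
  (Fs : nat -> {set T}) :
  is_metric d -> (1 <= k)%N -> (k <= #|T|)%N ->
  rg_run d k Fs ->
  cost d (Fs (#|T| - k)%N) <= (2 * k)%:R * OPT d k.
Proof.
move=> d_metric k_gt0 k_le_T run.
have [t _] : exists t : T, t \in T by apply/card_gt0P; apply: leq_trans k_le_T.
have [O /andP[O_gt0 O_le_k] ->] := OPT_attained d t k_gt0.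
have /card_gt0P[o0 o0O] := O_gt0.
have nearest c : exists2 o, o \in O & d c o <= cost d O.
  by have [o oO dco] := distF_attained d c o0O; exists o; rewrite // -dco distF_le_cost.
have [sigma sigmaO sigma_near] := fin_all_exists2 nearest.
rewrite mulr_natl.
by apply: (rg_run_cost_le d_metric run sigmaO sigma_near O_le_k); rewrite k_gt0.
Qed.
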